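(* For any cardinality $\kappa$, $\Delta_{c_0^+(\kappa)}^{(c)}(R)=R$ for all $R\in[0,\infty)$.
   Context: For a cardinal $\kappa$, $c_0(\kappa)$ is the space of real families $(x_\xi)_{\xi<\kappa}$ such that $\{\xi: |x_\xi|>\eta\}$ is finite for every $\eta>0$, with the sup norm, and $c_0^+(\kappa)=\{x\in c_0(\kappa): x_\xi\geq0\ \forall\xi\}$ with the inherited metric. For a metric space $X$ and a cover $\mathcal{U}$ of $X$: $\mathrm{diam}(\mathcal{U})=\sup_{U\in\mathcal{U}}\mathrm{diam}(U)$; $\mathcal{L}(\mathcal{U})=\sup\{d\in[0,\infty): \text{every } E\subseteq X \text{ with } \mathrm{diam}(E)<d \text{ is contained in some } U\in\mathcal{U}\}$; $\mathcal{U}$ is point-finite if each point lies in only finitely many members. $\Delta_X^{(c)}(R)=\inf\{\mathrm{diam}(\mathcal{U}): \mathcal{U} \text{ a point-finite cover of } X,\ \mathcal{L}(\mathcal{U})\geq R\}$. *)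

From HB Require Import structures.
From mathcomp Require Import all_boot all_order all_algebra.
From mathcomp Require Import all_classical all_reals.
From mathcomp Require Import ereal.
Set Implicit Arguments. Unset Strict Implicit. Unset Printing Implicit Defensive.
Import Order.TTheory GRing.Theory Num.Theory.
Local Open Scope classical_set_scope.
Local Open Scope ring_scope.

Section Defs.
Context {R : realType}.

(** Generic notions for a "metric space" given as a subset [X] of a type [T]
    equipped with a distance [d : T -> T -> \bar R]. *)
Section Generic.
Context {T : Type} (d : T -> T -> \bar R) (X : set T).

(* diameter of a set, with diam(empty) = 0 *)
Definition diam (E : set T) : \bar R :=
  ereal_sup ([set 0%E] `|` [set d x y | x in E & y in E]).

Definition cover_diam (U : set (set T)) : \bar R :=
  ereal_sup ([set 0%E] `|` [set diam A | A in U]).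

Definition is_cover (U : set (set T)) : Prop :=
  (forall A, U A -> A `<=` X) /\ X `<=` \bigcup_(A in U) A.

Definition point_finite (U : set (set T)) : Prop :=
  forall x, X x -> finite_set [set A | U A /\ A x].

Definition lebesgue_number (U : set (set T)) : \bar R :=
  ereal_sup [set (r%:E)%E | r in [set r : R | 0 <= r /\
     forall E, E `<=` X -> (diam E < r%:E)%E -> exists2 A, U A & E `<=` A]].

Definition Delta_c (r : R) : \bar R :=
  ereal_inf [set cover_diam U | U in
    [set U | is_cover U /\ point_finite U /\ (r%:E <= lebesgue_number U)%E]].

End Generic.

(** c_0^+(K): nonnegative families indexed by K vanishing at infinity,
    with the sup-norm distance. *)
Definition c0plus (K : Type) : set (K -> R) :=
  [set x | (forall k, 0 <= x k) /\
           forall eta : R, 0 < eta -> finite_set [set k | eta < `|x k|]].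

Definition sup_dist (K : Type) (x y : K -> R) : \bar R :=
  ereal_sup ([set 0%E] `|` [set (`|x k - y k|)%:E | k in [set: K]]).

End Defs.

From HB Require Import structures.
From mathcomp Require Import all_boot all_order all_algebra.
From mathcomp Require Import all_classical all_reals.
From mathcomp Require Import ereal lra.
Import Order.TTheory GRing.Theory Num.Theory.
Local Open Scope classical_set_scope.
Local Open Scope ring_scope.

(** Lower bound: [c_0^+(K)] contains the pair [{0, t e_k}] of diameter [t] for
    every [t >= 0]; a set of diameter [t < L(U)] lies in a member of [U], so
    [diam U >= t].  Upper bound: for [a > 0], the boxes
    [prod_k [n_k a, n_k a + r + a]] ([n : K -> nat]) cut down to [c_0^+(K)]
    have diameter [r + a]; a set of diameter [< r] fits in the box whose lower
    corner is its coordinatewise infimum rounded down to multiples of [a]; and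
    a point [x] lies only in boxes with [n_k a <= x_k], so [n_k <= x_k / a] and
    [n_k = 0] outside the finite set where [x_k > a / 2]. *)

Section Diameter.
Context {R : realType} {T : Type} (d : T -> T -> \bar R) (X : set T).

Lemma dist_le_diam {E : set T} {x y : T} : E x -> E y -> (d x y <= diam d E)%E.
Proof. by move=> Ex Ey; apply: ereal_sup_ubound; right; exists x => //; exists y. Qed.

Lemma le_diam {E F : set T} : E `<=` F -> (diam d E <= diam d F)%E.
Proof.
move=> EF; apply: ereal_sup_le => _ [->|[x Ex [y Ey <-]]]; first by left.
by right; exists x; [exact: EF|exists y => //; exact: EF].
Qed.

Lemma cover_diam_ge0 (U : set (set T)) : (0 <= cover_diam d U)%E.
Proof. by apply: ereal_sup_ubound; left. Qed.

Lemma diam_le_cover_diam {U : set (set T)} {A : set T} :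
  U A -> (diam d A <= cover_diam d U)%E.
Proof. by move=> UA; apply: ereal_sup_ubound; right; exists A. Qed.

Lemma Delta_c_le_cover_diam (U : set (set T)) (r : R) :
  is_cover X U -> point_finite X U -> (r%:E <= lebesgue_number d X U)%E ->
  (Delta_c d X r <= cover_diam d U)%E.
Proof. by move=> cU pfU rL; apply: ereal_inf_lbound; exists U. Qed.

Hypothesis diam_onto : forall {t : R}, 0 <= t -> exists2 E, E `<=` X & diam d E = t%:E.

Lemma lebesgue_number_le_cover_diam (U : set (set T)) :
  (lebesgue_number d X U <= cover_diam d U)%E.
Proof.
apply: ge_ereal_sup => _ [s [_ fits] <-]; apply/lee_subgt0Pr => e e0.
rewrite -EFinB; have [t_lt0|t_ge0] := ltP (s - e) 0.
  by apply: le_trans (cover_diam_ge0 U); rewrite lee_fin ltW.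
have [E EX diamE] := diam_onto t_ge0.
have [A UA EA] : exists2 A, U A & E `<=` A.
  by apply: fits => //; rewrite diamE lte_fin ltrBlDr ltrDl.
rewrite -diamE; apply: le_trans (le_diam EA) (diam_le_cover_diam UA).
Qed.

Lemma Delta_c_ge (r : R) : (r%:E <= Delta_c d X r)%E.
Proof.
apply: le_ereal_inf_tmp => _ [U [_ [_ rL]] <-].
exact: le_trans rL (lebesgue_number_le_cover_diam U).
Qed.

End Diameter.

Section BoundedSupport.
Context {T : Type}.

Definition bounded_supported (S : set T) (b : T -> nat) : set (T -> nat) :=
  [set n | (forall j, ~ S j -> n j = 0%N) /\ forall j, (n j <= b j)%N].

Lemma finite_bounded_supported_image (f : nat -> T) (m : nat) (b : T -> nat) :
  finite_set (bounded_supported (f @` `I_m) b).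
Proof.
elim: m => [|m IHm].
  apply: (sub_finite_set _ (finite_set1 (fun=> 0%N))) => n [n0 _].
  by apply/funext => j; apply: n0 => -[i].
pose k := f m.
pose glue (p : (T -> nat) * nat) j := if pselect (j = k) then p.2 else p.1 j.
apply: (sub_finite_set _ (finite_image glue (finite_setX IHm (finite_II (b k).+1)))).
move=> n [n0 nb]; exists ((fun j => if pselect (j = k) then 0%N else n j), n k).
  split; last by rewrite /= ltnS.
  split=> j /=; case: pselect => [_|jk] //; last exact: nb.
  move=> nj; apply: n0 => -[i /=]; rewrite ltnS leq_eqVlt => /orP[/eqP->|im] fij.
    by apply: jk; rewrite -fij.
  by apply: nj; exists i.
by apply/funext => j; rewrite /glue /=; case: pselect => [jk|] /=; rewrite ?jk.
Qed.

Lemma finite_bounded_supported (S : set T) (b : T -> nat) :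
  finite_set S -> finite_set (bounded_supported S b).
Proof.
have [->|S0 [m Sm]] := eqVneq S set0.
  move=> _; apply: (sub_finite_set _ (finite_set1 (fun=> 0%N))) => n [n0 _].
  by apply/funext => j; exact: n0.
have [f _] := finite_set_bij S0 Sm (@subset_refl _ S).
apply: (sub_finite_set _ (finite_bounded_supported_image f m b)) => n [n0 nb].
by split=> // j nj; apply: n0 => Sj; apply: nj; exact: surj.
Qed.

End BoundedSupport.

Lemma truncn_div_itv {R : realType} {a y : R} : 0 < a -> 0 <= y ->
  (Num.truncn (y / a))%:R * a <= y < (Num.truncn (y / a))%:R * a + a.
Proof.
move=> a0 y0; have /andP[lo hi] := truncn_itv (divr_ge0 y0 (ltW a0)).
rewrite -ler_pdivlMr // lo /=.
by move: hi; rewrite ltr_pdivrMr // -natr1 mulrDl mul1r.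
Qed.

Section SupDist.
Context {R : realType} {K : Type}.
Local Notation d := (@sup_dist R K).
Local Notation c0p := (@c0plus R K).

Lemma sup_dist_le (x y : K -> R) t : 0 <= t -> (forall k, `|x k - y k| <= t) ->
  (d x y <= t%:E)%E.
Proof. by move=> t0 xy; apply: ge_ereal_sup => _ [->|[k _ <-]]; rewrite lee_fin. Qed.

Lemma le_sup_dist (x y : K -> R) k : (`|x k - y k|%:E <= d x y)%E.
Proof. by apply: ereal_sup_ubound; right; exists k. Qed.

Lemma diam_sup_dist_le (E : set (K -> R)) t : 0 <= t ->
  (forall x y, E x -> E y -> forall k, `|x k - y k| <= t) -> (diam d E <= t%:E)%E.
Proof.
move=> t0 Et; apply: ge_ereal_sup => _ [->|[x Ex [y Ey <-]]]; first by rewrite lee_fin.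
exact: sup_dist_le (Et x y Ex Ey).
Qed.

Definition point_mass (k0 : K) (t : R) : K -> R :=
  fun k => if `[< k = k0 >] then t else 0.

Lemma c0plus_point_mass k0 t : 0 <= t -> c0p (point_mass k0 t).
Proof.
rewrite /point_mass => t0; split=> [k|eta eta0]; first by case: asboolP.
apply: (sub_finite_set _ (finite_set1 k0)) => k /=.
have [//|nk] := pselect (k = k0).
by rewrite asboolF // normr0 => /(lt_trans eta0); rewrite ltxx.
Qed.

Lemma diam_point_mass_pair k0 t : 0 <= t ->
  diam d [set point_mass k0 0; point_mass k0 t] = t%:E.
Proof.
move=> t0; apply/eqP; rewrite eq_le; apply/andP; split.
  apply: diam_sup_dist_le => // x y Ex Ey k.
  have mass_itv z : [set point_mass k0 0; point_mass k0 t] z -> 0 <= z k <= t.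
    by case=> ->; rewrite /point_mass; case: asboolP => _; rewrite ?lexx ?t0.
  have /andP[? ?] := mass_itv x Ex; have /andP[? ?] := mass_itv y Ey.
  by rewrite ler_norml; apply/andP; split; lra.
apply: le_trans (dist_le_diam d (or_introl erefl) (or_intror erefl)).
apply: le_trans (le_sup_dist _ _ k0).
by rewrite /point_mass asboolT // sub0r normrN ger0_norm.
Qed.

Lemma c0plus_diam_onto (k0 : K) t : 0 <= t ->
  exists2 E, E `<=` c0p & diam d E = t%:E.
Proof.
move=> t0; exists [set point_mass k0 0; point_mass k0 t].
  by move=> x [|] ->; apply: c0plus_point_mass.
exact: diam_point_mass_pair.
Qed.

Section BoxCover.
Variables a r : R.

Definition box (n : K -> nat) : set (K -> R) :=
  [set x | c0p x /\ forall k, (n k)%:R * a <= x k <= (n k)%:R * a + r + a].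

Definition box_cover : set (set (K -> R)) := range box.

Lemma box_cover_is_cover : 0 < a -> 0 <= r -> is_cover c0p box_cover.
Proof.
move=> a_gt0 r_ge0; split; first by move=> _ [n _ <-] x [].
move=> x cx; pose n k := Num.truncn (x k / a).
exists (box n); first by exists n.
split=> // k; have /andP[lo hi] := truncn_div_itv a_gt0 (cx.1 k).
by rewrite lo /=; lra.
Qed.

Lemma cover_diam_box_cover : 0 < a -> 0 <= r ->
  (cover_diam d box_cover <= (r + a)%:E)%E.
Proof.
move=> a_gt0 r_ge0; apply: ge_ereal_sup => _ [->|[_ [n _ <-] <-]].
  by rewrite lee_fin; lra.
apply: diam_sup_dist_le => [|x y [_ xn] [_ yn] k]; first lra.
have /andP[? ?] := xn k; have /andP[? ?] := yn k.
by rewrite ler_norml; apply/andP; split; lra.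
Qed.

Lemma point_finite_box_cover : 0 < a -> point_finite c0p box_cover.
Proof.
move=> a_gt0 x [x_ge0 x_c0].
pose S := [set k | a / 2 < `|x k|].
have finS : finite_set S by apply: x_c0; rewrite divr_gt0.
pose b k := Num.truncn (x k / a).
apply: (sub_finite_set _ (finite_image box (finite_bounded_supported _ b finS))).
move=> _ [[n _ <-] [_ xn]]; exists n => //; split=> k; have /andP[lo _] := xn k.
  move=> /negP; rewrite -leNgt ger0_norm // => xk_small.
  suff : (n k < 1)%N by rewrite ltnS leqn0 => /eqP.
  by rewrite -(ltr_nat R) -(ltr_pM2r a_gt0) mul1r; lra.
by rewrite /b truncn_ge_nat ?divr_ge0 ?(ltW a_gt0) // ler_pdivlMr.
Qed.

Lemma lebesgue_number_box_cover : 0 < a -> 0 <= r ->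
  (r%:E <= lebesgue_number d c0p box_cover)%E.
Proof.
move=> a_gt0 r_ge0; apply: ereal_sup_ubound; exists r => //; split=> // E EX diamE.
pose m k := inf [set y k | y in E]; pose n k := Num.truncn (m k / a).
exists (box n); first by exists n.
move=> x Ex; split=> [|k]; first exact: EX.
have E0 : [set y k | y in E] !=set0 by exists (x k), x.
have m_ge0 : 0 <= m k by apply: lb_le_inf => // _ [y Ey <-]; exact: (EX _ Ey).1.
have m_le_x : m k <= x k.
  by apply: ge_inf; [exists 0 => _ [y Ey <-]; exact: (EX _ Ey).1|exists x].
have x_sub_r_le_m : x k - r <= m k.
  apply: lb_le_inf => // _ [y Ey <-].
  have : (`|x k - y k|%:E < r%:E)%E.
    exact: le_lt_trans (le_sup_dist x y k) (le_lt_trans (dist_le_diam d Ex Ey) diamE).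
  by rewrite lte_fin ltr_norml => /andP[_ ?]; lra.
have /andP[lo hi] := truncn_div_itv a_gt0 m_ge0.
by apply/andP; split; lra.
Qed.

End BoxCover.

End SupDist.

Theorem proposition3p10 (R : realType) (K : Type) (hK : inhabited K)
  (r : R) (hr : 0 <= r) :
  Delta_c (@sup_dist R K) (@c0plus R K) r = (r%:E)%E.
Proof.
case: hK => k0; apply/eqP; rewrite eq_le; apply/andP; split.
  apply/lee_addgt0Pr => a a_gt0; rewrite -EFinD.
  apply: le_trans (cover_diam_box_cover a r a_gt0 hr).
  apply: Delta_c_le_cover_diam.
  - exact: box_cover_is_cover a r a_gt0 hr.
  - exact: point_finite_box_cover a r a_gt0.
  - exact: lebesgue_number_box_cover a r a_gt0 hr.
by apply: Delta_c_ge => t; apply: c0plus_diam_onto.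
Qed.
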